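(* Let $n\ge1$ and let $\mathbf{R}$ be a subalgebra of $\mathbf{P\L}_n\times\mathbf{P\L}_n$. Suppose $\mathbf{R}$ is not of the form $\mathbf{S}_1\times\mathbf{S}_2$ with $\mathbf{S}_1,\mathbf{S}_2$ subalgebras of $\mathbf{P\L}_n$. Then one of the following holds: - $\mathbf{R}\subseteq{\le}=\{(x,y):x\le y\}$; - $\mathbf{R}\subseteq{\ge}=\{(x,y):x\ge y\}$.
   Context: For $n\ge 1$, the algebra $\mathbf{P\L}_n=\langle\{0,\tfrac1n,\dots,\tfrac{n-1}{n},1\},\wedge,\vee,\odot,\oplus,0,1\rangle$ has $\wedge=\min$, $\vee=\max$, $x\odot y=\max\{0,x+y-1\}$ and $x\oplus y=\min\{1,x+y\}$. The order $\le$ is the usual numerical order. Binary relations on $\mathbf{P\L}_n$ are identified with subsets of $\mathbf{P\L}_n\times\mathbf{P\L}_n$, and operations on $\mathbf{P\L}_n\times\mathbf{P\L}_n$ are computed componentwise. *)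

From mathcomp Require Import all_boot.
Set Implicit Arguments. Unset Strict Implicit. Unset Printing Implicit Defensive.

(* The MV-chain PL_n = {0, 1/n, ..., 1} is encoded as 'I_n.+1:
   the ordinal k stands for the rational k/n.  Operations are the
   Lukasiewicz ones scaled by n. *)
Definition PL (n : nat) : finType := 'I_n.+1.

Section PLops.
Variable n : nat.
Definition pl_zero : PL n := ord0.
Definition pl_one : PL n := ord_max.
Definition pl_meet (x y : PL n) : PL n := inord (minn x y).
Definition pl_join (x y : PL n) : PL n := inord (maxn x y).
(* x (.) y = max{0, x + y - 1}  ~~>  (x + y) - n  (truncated) *)
Definition pl_odot (x y : PL n) : PL n := inord ((x + y) - n).
(* x (+) y = min{1, x + y}  ~~>  min(n, x + y) *)
Definition pl_oplus (x y : PL n) : PL n := inord (minn n (x + y)).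

Definition pl_subalg (S : {set PL n}) : Prop :=
  [/\ pl_zero \in S, pl_one \in S &
   forall x y, x \in S -> y \in S ->
     [/\ pl_meet x y \in S, pl_join x y \in S,
         pl_odot x y \in S & pl_oplus x y \in S]].

Definition pl2_subalg (R : {set PL n * PL n}) : Prop :=
  [/\ (pl_zero, pl_zero) \in R, (pl_one, pl_one) \in R &
   forall p q, p \in R -> q \in R ->
     [/\ (pl_meet p.1 q.1, pl_meet p.2 q.2) \in R,
         (pl_join p.1 q.1, pl_join p.2 q.2) \in R,
         (pl_odot p.1 q.1, pl_odot p.2 q.2) \in R &
         (pl_oplus p.1 q.1, pl_oplus p.2 q.2) \in R]].
End PLops.

From mathcomp Require Import all_boot.
From mathcomp Require Import zify.

Set Implicit Arguments.
Unset Strict Implicit.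
Unset Printing Implicit Defensive.

(* Let R be a subalgebra of PL_n x PL_n, the chain PL_n being
   encoded by the ordinals k < n+1.  If R contains a strictly increasing
   pair (x, y), x < y, then it contains (0, 1): repeatedly replace (x, y) by
   (x (+) x, y (+) y) when x + y < 1, and by (x (.) x, y (.) y) otherwise.
   Each move keeps the pair strictly increasing and strictly decreases the
   measure 2 (1 - (y - x)) + [x > 0], so the process ends at (0, 1).
   Applied to the converse relation, a strictly decreasing pair yields
   (1, 0) in R.  With both (0, 1) and (1, 0) in R, every (a, b) with a a
   first and b a second coordinate of R is recovered as
   (a, _) /\ (1, 0)  \/  (_, b) /\ (0, 1), so R is the product of its two
   projections, which are subalgebras of PL_n.  Hence, if R is not a product,
   it cannot contain pairs strictly ordered both ways: R is included in <=
   or in >=. *)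

Section Values.
Variable n : nat.
Implicit Types x y : PL n.

Lemma pl_meetE x y : nat_of_ord (pl_meet x y) = minn x y.
Proof. by rewrite /pl_meet inordK // (leq_ltn_trans (geq_minl _ _)). Qed.

Lemma pl_joinE x y : nat_of_ord (pl_join x y) = maxn x y.
Proof. by rewrite /pl_join inordK // gtn_max !ltn_ord. Qed.

Lemma pl_odotE x y : nat_of_ord (pl_odot x y) = x + y - n.
Proof. rewrite /pl_odot inordK //; have := ltn_ord x; have := ltn_ord y; lia. Qed.

Lemma pl_oplusE x y : nat_of_ord (pl_oplus x y) = minn n (x + y).
Proof. by rewrite /pl_oplus inordK // ltnS geq_minl. Qed.

Lemma pl_meet1 x : pl_meet x (pl_one n) = x.
Proof. by apply: val_inj; rewrite /= pl_meetE /=; apply/minn_idPl; rewrite -ltnS. Qed.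

Lemma pl_meet0 x : pl_meet x (pl_zero n) = pl_zero n.
Proof. by apply: val_inj; rewrite /= pl_meetE minn0. Qed.

Lemma pl_join0 x : pl_join x (pl_zero n) = x.
Proof. by apply: val_inj; rewrite /= pl_joinE maxn0. Qed.

Lemma pl_0join x : pl_join (pl_zero n) x = x.
Proof. by apply: val_inj; rewrite /= pl_joinE max0n. Qed.

Definition doubling_measure x y : nat := 2 * (n - (y - x)) + (0 < x).

Lemma oplus2_step x y : x < y -> x + y < n ->
  pl_oplus x x < pl_oplus y y /\
  doubling_measure (pl_oplus x x) (pl_oplus y y) < doubling_measure x y.
Proof. by rewrite /doubling_measure !pl_oplusE; lia. Qed.

Lemma odot2_step x y : x < y -> n <= x + y -> 0 < x ->
  pl_odot x x < pl_odot y y /\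
  doubling_measure (pl_odot x x) (pl_odot y y) < doubling_measure x y.
Proof.
rewrite /doubling_measure !pl_odotE; have := ltn_ord y; lia.
Qed.
End Values.

Section Doubling.
Variables (n : nat) (R : {set PL n * PL n}).
Hypothesis R_oplus2 :
  forall p, p \in R -> (pl_oplus p.1 p.1, pl_oplus p.2 p.2) \in R.
Hypothesis R_odot2 :
  forall p, p \in R -> (pl_odot p.1 p.1, pl_odot p.2 p.2) \in R.

Lemma increasing_pair_reaches_01 p :
  p \in R -> p.1 < p.2 -> (pl_zero n, pl_one n) \in R.
Proof.
case: p => x y /=; have [k] := ubnP (doubling_measure x y).
elim: k x y => // k IH x y lt_mk xyR lt_xy.
have [sum_lt|sum_ge] := ltnP (x + y) n.
  have [lt' lt_m] := oplus2_step lt_xy sum_lt.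
  by apply: (IH _ _ _ (R_oplus2 xyR) lt') => /=; lia.
have [x0|x_pos] := posnP x; last first.
  have [lt' lt_m] := odot2_step lt_xy sum_ge x_pos.
  by apply: (IH _ _ _ (R_odot2 xyR) lt') => /=; lia.
have -> : (pl_zero n, pl_one n) = (x, y).
  by congr pair; apply: val_inj => /=; have := ltn_ord y; lia.
exact: xyR.
Qed.
End Doubling.

Section Subalgebras.
Variables (n : nat) (R : {set PL n * PL n}).
Hypothesis subR : pl2_subalg R.

Lemma pl2_subalg_01 p : p \in R -> p.1 < p.2 -> (pl_zero n, pl_one n) \in R.
Proof.
have [_ _ clR] := subR.
by apply: increasing_pair_reaches_01 => q qR; have [] := clR q q qR qR.
Qed.

Lemma mem_fst_image x y : (x, y) \in R -> x \in [set p.1 | p in R].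
Proof. by move=> xyR; apply/imsetP; exists (x, y). Qed.

Lemma pl2_subalg_fst : pl_subalg [set p.1 | p in R].
Proof.
have [R0 R1 clR] := subR.
split; [exact: mem_fst_image R0 | exact: mem_fst_image R1 |].
move=> _ _ /imsetP[p pR ->] /imsetP[q qR ->].
by have [? ? ? ?] := clR p q pR qR; split; apply: mem_fst_image; eassumption.
Qed.

(* If R contains (0, 1) and (1, 0), it is the product of its projections:
   (a, b) = ((a, _) /\ (1, 0)) \/ ((_, b) /\ (0, 1)). *)
Lemma pl2_subalg_product :
  (pl_zero n, pl_one n) \in R -> (pl_one n, pl_zero n) \in R ->
  R = setX [set p.1 | p in R] [set p.2 | p in R].
Proof.
move=> R01 R10; have [_ _ clR] := subR.
apply/setP => -[a b]; rewrite inE /=; apply/idP/andP.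
  by move=> abR; split; apply/imsetP; exists (a, b).
case=> /imsetP[p pR ->] /imsetP[q qR ->].
have [p10R _ _ _] := clR p _ pR R10.
have [q01R _ _ _] := clR q _ qR R01.
have [_ joinR _ _] := clR _ _ p10R q01R.
by move: joinR; rewrite /= !pl_meet1 !pl_meet0 pl_join0 pl_0join.
Qed.
End Subalgebras.

Definition pl2_conv n (R : {set PL n * PL n}) : {set PL n * PL n} :=
  [set p | (p.2, p.1) \in R].

Lemma in_pl2_conv n (R : {set PL n * PL n}) x y :
  ((x, y) \in pl2_conv R) = ((y, x) \in R).
Proof. by rewrite inE. Qed.

Lemma pl2_subalg_conv n (R : {set PL n * PL n}) :
  pl2_subalg R -> pl2_subalg (pl2_conv R).
Proof.
move=> [R0 R1 clR]; split; rewrite ?in_pl2_conv //.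
move=> [x1 y1] [x2 y2]; rewrite !in_pl2_conv => p1R p2R.
by have [? ? ? ?] := clR _ _ p1R p2R.
Qed.

Lemma snd_image_conv n (R : {set PL n * PL n}) :
  [set p.2 | p in R] = [set p.1 | p in pl2_conv R].
Proof.
apply/setP => y; apply/imsetP/imsetP => -[[a b] abR ->].
  by exists (b, a); rewrite ?in_pl2_conv.
by exists (b, a); move: abR; rewrite in_pl2_conv.
Qed.

Theorem lemma3p8 (n : nat) (hn : 1 <= n) (R : {set PL n * PL n}) :
  pl2_subalg R ->
  ~ (exists S1 S2 : {set PL n},
       [/\ pl_subalg S1, pl_subalg S2 & R = setX S1 S2]) ->
  (forall p, p \in R -> (p.1 <= p.2)%N) \/
  (forall p, p \in R -> (p.2 <= p.1)%N).
Proof.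
move=> subR not_product.
case: (boolP [exists p in R, p.2 < p.1]) => [/exists_inP[q qR q_dec]|/exists_inP no_dec].
  2: by left=> p pR; rewrite leqNgt; apply/negP => ?; apply: no_dec; exists p.
case: (boolP [exists p in R, p.1 < p.2]) => [/exists_inP[r rR r_inc]|/exists_inP no_inc].
  2: by right=> p pR; rewrite leqNgt; apply/negP => ?; apply: no_inc; exists p.
have subR' := pl2_subalg_conv subR.
have R01 := pl2_subalg_01 subR rR r_inc.
have R10 : (pl_one n, pl_zero n) \in R.
  rewrite -in_pl2_conv; apply: (pl2_subalg_01 subR' (p := (q.2, q.1))) => //.
  by rewrite in_pl2_conv -surjective_pairing.
exfalso; apply: not_product.
exists [set p.1 | p in R], [set p.2 | p in R]; split.
- exact: pl2_subalg_fst.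
- by rewrite snd_image_conv; apply: pl2_subalg_fst.
- exact: pl2_subalg_product.
Qed.
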